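(* Let $p\ge1$, assume $\mathrm{diam}(\mathcal X)\le C_{\mathcal X}$, $\mathrm{diam}(\mathcal Y)\le C_{\mathcal Y}$, and let $C_1,C_2$ satisfy the requirements of the GOSPA1 and GOSPA2 definitions (including, if $p>1$, the condition on $d_{\mathcal Y}$ for GOSPA2). Then for all graphs in $\mathbb G$: (a) $d_{\mathbb G,R_1}(([n],v,e),([n],w,f))=d_{\mathbb G,R_2}(([n],v,e),([n],w,f))$ for graphs of equal size $n$; (b) if $C_1^p\le C_2^p-\frac12C_{\mathcal Y}^p$, then $d_{\mathbb G,R_1}(([m],v,e),([n],w,f))\le d_{\mathbb G,R_2}(([m],v,e),([n],w,f))$; (c) if $C_2^p\le C_1^p-\frac12C_{\mathcal Y}^p$, then $d_{\mathbb G,R_1}(([m],v,e),([n],w,f))\ge d_{\mathbb G,R_2}(([m],v,e),([n],w,f))$; (d) if $C>0$ satisfies $C^p\ge C_i^p$ ($i\in\{1,2\}$), then $d_{\mathbb G,A}(([m],v,e),([n],w,f))\ge d_{\mathbb G,R_i}(([m],v,e),([n],w,f))$, where $d_{\mathbb G,A}$ uses penalty $C$ and the same order $p$.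
   Context: Let $(\mathcal X,d_{\mathcal X})$ and $(\mathcal Y,d_{\mathcal Y})$ be pseudometric spaces (symmetric, satisfying the triangle inequality, $d(z,z)=0$), with a distinguished element $y_0\in\mathcal Y$ meaning ''no edge''. For $n\in\mathbb N_0$ write $[n]=\{1,\dots,n\}$ ($[0]=\emptyset$) and $S_n$ for the set of permutations of $[n]$. An attributed simple graph is a triple $([n],v,e)$ with $v:[n]\to\mathcal X$ and $e:[n]^2\to\mathcal Y$ symmetric ($e(i,i')=e(i',i)$) with $e(i,i)=y_0$ for all $i$; write $v_i=v(i)$, $e_{ii'}=e(i,i')$. Two graphs $([n],v,e)$, $([n],w,f)$ are regarded as equal if there is $\pi\in S_n$ with $v_i=w_{\pi(i)}$ and $e_{ii'}=f_{\pi(i)\pi(i')}$ for all $i,i'\in[n]$; $\mathbb G$ denotes the set of such graphs. GTT distance: for $p\ge1$, $C>0$ and $([m],v,e),([n],w,f)\in\mathbb G$ with $m\le n$, $$d_{\mathbb G,A}(([m],v,e),([n],w,f))=\min_{I\subset[m],\,\pi\in S_n}\Big[(m+n-2|I|)C^p+\sum_{i\in I}d_{\mathcal X}(v_i,w_{\pi(i)})^p+\tfrac12\sum_{(i,i')\in I^2}d_{\mathcal Y}(e_{ii'},f_{\pi(i)\pi(i')})^p+\tfrac12\sum_{(i,i')\in[m]^2\setminus I^2}d_{\mathcal Y}(e_{ii'},y_0)^p+\tfrac12\sum_{(j,j')\in[n]^2\setminus\pi(I)^2}d_{\mathcal Y}(y_0,f_{jj'})^p\Big]^{1/p},$$ and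 for $m>n$ it is defined by swapping the two arguments. GOSPA distances: assume $\mathrm{diam}(\mathcal X)\le C_{\mathcal X}$, $\mathrm{diam}(\mathcal Y)\le C_{\mathcal Y}$, $p\ge1$. For $([m],v,e),([n],w,f)\in\mathbb G$ with $n\ge\max\{m,1\}$ (otherwise swap arguments; both distances are $0$ if $m=n=0$), using the convention $0/0:=0$: GOSPA1 (penalty $C_1^p\ge C_{\mathcal X}^p+\frac12C_{\mathcal Y}^p$): $$d_{\mathbb G,R_1}=\frac{1}{n^{1/p}}\min_{\pi\in S_n}\Big[(n-m)C_1^p+\sum_{i\in[m]}d_{\mathcal X}(v_i,w_{\pi(i)})^p+\frac12\frac1{n-1}\sum_{i\in[m]}\Big(\sum_{i'\in[m]}d_{\mathcal Y}(e_{ii'},f_{\pi(i)\pi(i')})^p+(n-m)C_{\mathcal Y}^p\Big)\Big]^{1/p};$$ GOSPA2 (penalty $C_2^p\ge C_{\mathcal X}^p+C_{\mathcal Y}^p$; for $p>1$ additionally requiring $d_{\mathcal Y}(y_1,y_2)\le\max\{d_{\mathcal Y}(y_1,y_0),d_{\mathcal Y}(y_0,y_2)\}$ for all $y_1,y_2$): $$d_{\mathbb G,R_2}=\frac{1}{n^{1/p}}\min_{\pi\in S_n}\Big[(n-m)C_2^p+\sum_{i\in[m]}d_{\mathcal X}(v_i,w_{\pi(i)})^p+\frac12\frac1{n-1}\Big(\sum_{(i,i')\in[m]^2}d_{\mathcal Y}(e_{ii'},f_{\pi(i)\pi(i')})^p+\sum_{(i,i')\in[n]^2\setminus[m]^2}d_{\mathcal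 Y}(y_0,f_{\pi(i)\pi(i')})^p\Big)\Big]^{1/p}.$$ *)

From HB Require Import structures.
From mathcomp Require Import all_boot all_order all_algebra all_fingroup.
From mathcomp Require Import all_classical all_reals all_analysis.
Set Implicit Arguments. Unset Strict Implicit. Unset Printing Implicit Defensive.
Import Order.TTheory GRing.Theory Num.Theory.
Local Open Scope ring_scope.

Lemma leqF_ge (m n : nat) : (m <= n)%N = false -> (n <= m)%N.
Proof. by move/negbT; rewrite -ltnNge; apply: ltnW. Qed.

Section GraphDist.
Variables (R : realType) (X Y : Type) (dX : X -> X -> R) (dY : Y -> Y -> R)
  (y0 : Y) (p : R).

Definition is_graph (n : nat) (e : 'I_n -> 'I_n -> Y) : Prop :=
  (forall i j, e i j = e j i) /\ (forall i, e i i = y0).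

Definition gtt_cost (C : R) (m n : nat) (H : (m <= n)%N)
  (v : 'I_m -> X) (e : 'I_m -> 'I_m -> Y) (w : 'I_n -> X) (f : 'I_n -> 'I_n -> Y)
  (I : {set 'I_m}) (s : 'S_n) : R :=
  let pi := fun i : 'I_m => s (widen_ord H i) in
  (m%:R + n%:R - 2 * #|I|%:R) * powR C p
  + \sum_(i in I) powR (dX (v i) (w (pi i))) p
  + 2^-1 * \sum_(i in I) \sum_(i' in I) powR (dY (e i i') (f (pi i) (pi i'))) p
  + 2^-1 * \sum_(i : 'I_m) \sum_(i' : 'I_m | ~~ ((i \in I) && (i' \in I)))
             powR (dY (e i i') y0) p
  + 2^-1 * \sum_(j : 'I_n) \sum_(j' : 'I_n | ~~ ((j \in pi @: I) && (j' \in pi @: I)))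
             powR (dY y0 (f j j')) p.

Definition gtt_le (C : R) (m n : nat) (H : (m <= n)%N)
  (v : 'I_m -> X) (e : 'I_m -> 'I_m -> Y) (w : 'I_n -> X) (f : 'I_n -> 'I_n -> Y) : R :=
  powR (\big[Num.min/gtt_cost C H v e w f finset.set0 1%g]_(x : {set 'I_m} * 'S_n)
          gtt_cost C H v e w f x.1 x.2) p^-1.

Definition dGA (C : R) (m n : nat)
  (v : 'I_m -> X) (e : 'I_m -> 'I_m -> Y) (w : 'I_n -> X) (f : 'I_n -> 'I_n -> Y) : R :=
  (if (m <= n)%N as b return (m <= n)%N = b -> R
   then fun H => gtt_le C H v e w f
   else fun H => gtt_le C (leqF_ge H) w f v e) (erefl (m <= n)%N).

Definition g1_cost (C1 CY : R) (m n : nat) (H : (m <= n)%N)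
  (v : 'I_m -> X) (e : 'I_m -> 'I_m -> Y) (w : 'I_n -> X) (f : 'I_n -> 'I_n -> Y)
  (s : 'S_n) : R :=
  let pi := fun i : 'I_m => s (widen_ord H i) in
  (n%:R - m%:R) * powR C1 p
  + \sum_(i : 'I_m) powR (dX (v i) (w (pi i))) p
  + 2^-1 * (n%:R - 1)^-1 *
      \sum_(i : 'I_m) (\sum_(i' : 'I_m) powR (dY (e i i') (f (pi i) (pi i'))) p
                       + (n%:R - m%:R) * powR CY p).

(* note: x / 0 = 0 in MathComp, which implements the convention 0/0 := 0 *)
Definition g1_le (C1 CY : R) (m n : nat) (H : (m <= n)%N)
  (v : 'I_m -> X) (e : 'I_m -> 'I_m -> Y) (w : 'I_n -> X) (f : 'I_n -> 'I_n -> Y) : R :=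
  if n == 0%N then 0 else
  (powR n%:R p^-1)^-1 *
  powR (\big[Num.min/g1_cost C1 CY H v e w f 1%g]_(s : 'S_n) g1_cost C1 CY H v e w f s) p^-1.

Definition dGR1 (C1 CY : R) (m n : nat)
  (v : 'I_m -> X) (e : 'I_m -> 'I_m -> Y) (w : 'I_n -> X) (f : 'I_n -> 'I_n -> Y) : R :=
  (if (m <= n)%N as b return (m <= n)%N = b -> R
   then fun H => g1_le C1 CY H v e w f
   else fun H => g1_le C1 CY (leqF_ge H) w f v e) (erefl (m <= n)%N).

Definition g2_cost (C2 : R) (m n : nat) (H : (m <= n)%N)
  (v : 'I_m -> X) (e : 'I_m -> 'I_m -> Y) (w : 'I_n -> X) (f : 'I_n -> 'I_n -> Y)
  (s : 'S_n) : R :=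
  let pi := fun i : 'I_m => s (widen_ord H i) in
  (n%:R - m%:R) * powR C2 p
  + \sum_(i : 'I_m) powR (dX (v i) (w (pi i))) p
  + 2^-1 * (n%:R - 1)^-1 *
      (\sum_(i : 'I_m) \sum_(i' : 'I_m) powR (dY (e i i') (f (pi i) (pi i'))) p
       + \sum_(j : 'I_n) \sum_(j' : 'I_n | ~~ ((j < m)%N && (j' < m)%N))
            powR (dY y0 (f (s j) (s j'))) p).

Definition g2_le (C2 : R) (m n : nat) (H : (m <= n)%N)
  (v : 'I_m -> X) (e : 'I_m -> 'I_m -> Y) (w : 'I_n -> X) (f : 'I_n -> 'I_n -> Y) : R :=
  if n == 0%N then 0 else
  (powR n%:R p^-1)^-1 *
  powR (\big[Num.min/g2_cost C2 H v e w f 1%g]_(s : 'S_n) g2_cost C2 H v e w f s) p^-1.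

Definition dGR2 (C2 : R) (m n : nat)
  (v : 'I_m -> X) (e : 'I_m -> 'I_m -> Y) (w : 'I_n -> X) (f : 'I_n -> 'I_n -> Y) : R :=
  (if (m <= n)%N as b return (m <= n)%N = b -> R
   then fun H => g2_le C2 H v e w f
   else fun H => g2_le C2 (leqF_ge H) w f v e) (erefl (m <= n)%N).

End GraphDist.

(* Everything is compared assignment by assignment, for a fixed permutation [s] of the
   larger graph's vertices, and then passed through the minimum over [s] and the
   normalised p-th root, both of which are monotone.

   The two GOSPA costs of [s] differ only in their charge for the edges of the larger graph
   not covered by the matched block: GOSPA1 charges a flat [(n - m) CY^p] per matched
   vertex, GOSPA2 the actual edges, of which there are at most [(n - m)(m + n - 1)] nonzero
   ones.  After the normalisation by [n - 1] the two charges differ by at most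
   [(n - m) CY^p / 2], which the gap between the penalties absorbs; for [m = n] there is
   nothing to charge.

   For (d), a GTT assignment [(I, s)] dominates the GOSPA cost of [s]: a vertex of the
   smaller graph left out of [I] pays two GTT penalties instead of at most [CX^p], and an
   edge cost between matched vertices is split through [y0] by the relaxed triangle
   inequality [dY(y1,y2)^p <= dY(y1,y0)^p + dY(y0,y2)^p] into an edge deletion and an edge
   insertion of GTT.  GOSPA1 is only dominated up to the factor [n], which its
   normalisation [n^(-1/p)] absorbs. *)

From HB Require Import structures.
From mathcomp Require Import all_boot all_order all_algebra all_fingroup.
From mathcomp Require Import all_classical all_reals all_analysis.
From mathcomp Require Import lra.
Import Order.TTheory GRing.Theory Num.Theory.
Local Open Scope ring_scope.

Set Implicit Arguments.
Unset Strict Implicit.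
Unset Printing Implicit Defensive.

Lemma dep_if_rel (b : bool) (A B : Type) (P : A -> B -> Prop)
    (f1 : b = true -> A) (g1 : b = false -> A)
    (f2 : b = true -> B) (g2 : b = false -> B) :
  (forall H, P (f1 H) (f2 H)) -> (forall H, P (g1 H) (g2 H)) ->
  P ((if b as b' return b = b' -> A then f1 else g1) (erefl b))
    ((if b as b' return b = b' -> B then f2 else g2) (erefl b)).
Proof. by case: b f1 g1 f2 g2 => f1 g1 f2 g2 Pf Pg; [apply: Pf | apply: Pg]. Qed.

Section BigMinSelf.
Context {d : Order.disp_t} {T : orderType d} {I : finType}.

Lemma bigmin_attained (F : I -> T) (i0 : I) :
  exists j, \big[Order.min/F i0]_i F i = F j.
Proof.
apply: (big_ind (fun x => exists j, x = F j)); [by exists i0 | | by move=> i; exists i].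
by move=> _ _ [j1 ->] [j2 ->]; case: (leP (F j1) (F j2)); [exists j1 | exists j2].
Qed.

Lemma le_bigmin_self (F G : I -> T) (i0 : I) : (forall i, (F i <= G i)%O) ->
  (\big[Order.min/F i0]_i F i <= \big[Order.min/G i0]_i G i)%O.
Proof.
move=> FG; have [j ->] := bigmin_attained G i0.
exact: le_trans (bigmin_le _ j F) (FG j).
Qed.

End BigMinSelf.

Lemma bigmin_self_ge0 (R : realDomainType) (I : finType) (F : I -> R) (i0 : I) :
  (forall i, 0 <= F i) -> 0 <= \big[Num.min/F i0]_i F i.
Proof. by move=> F0; have [j ->] := bigmin_attained F i0. Qed.

Lemma pseudometric_ge0 (R : numDomainType) (Z : Type) (dZ : Z -> Z -> R) :
  (forall z, dZ z z = 0) -> (forall z z', dZ z z' = dZ z' z) ->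
  (forall z z' z'', dZ z z'' <= dZ z z' + dZ z' z'') ->
  forall z z', 0 <= dZ z z'.
Proof.
move=> refl sym tri z z'.
by move: (tri z z' z); rewrite refl (sym z' z) -mulr2n pmulrn_lge0.
Qed.

Section SumsOfConstants.
Variables (R : pzRingType) (n : nat) (c : R).

Lemma sumr_ord_lt_const m : (m <= n)%N -> \sum_(j < n | (j < m)%N) c = m%:R * c.
Proof. by move=> mn; rewrite (big_ord_narrow mn) sumr_const card_ord mulr_natl. Qed.

Lemma sumr_ord_ge_const m : (m <= n)%N ->
  \sum_(j < n | ~~ (j < m)%N) c = (n%:R - m%:R) * c.
Proof.
move=> mn; have E : \sum_(j < n) c
    = \sum_(j < n | (j < m)%N) c + \sum_(j < n | ~~ (j < m)%N) c by exact: bigID.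
rewrite sumr_const card_ord sumr_ord_lt_const // in E.
by rewrite mulrBl [n%:R * c]mulr_natl E addrC addKr.
Qed.

Lemma sumr_ord_neq_const (j : 'I_n) : \sum_(j' < n | j' != j) c = (n%:R - 1) * c.
Proof.
have E : \sum_(j' < n) c = c + \sum_(j' < n | j' != j) c by exact: bigD1.
rewrite sumr_const card_ord in E.
by rewrite mulrBl [n%:R * c]mulr_natl mul1r E addrC addKr.
Qed.

End SumsOfConstants.

Section InversePredecessor.
Variable R : numFieldType.

Lemma invr_pred_ge0 n : (0 < n)%N -> 0 <= (n%:R - 1 : R)^-1.
Proof. by move=> n0; rewrite invr_ge0 subr_ge0 ler1n. Qed.

Lemma invr_pred_le1 n : (n%:R - 1 : R)^-1 <= 1.
Proof.
case: n => [|[|n]].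
- by rewrite sub0r invrN invr1; apply: le_trans (lerN10 _) ler01.
- by rewrite subrr invr0 ler01.
- by rewrite -natr1 addrK invf_le1 ?ler1n ?ltr0n.
Qed.

Lemma invr_pred_mulr_le1 n : (0 < n)%N -> (n%:R - 1 : R)^-1 * (n%:R - 1) <= 1.
Proof.
case: n => [//|[|n]] _; first by rewrite subrr mulr0 ler01.
by rewrite mulVf // -natr1 addrK pnatr_eq0.
Qed.

Lemma invr_pred_mul_le m n : (m <= n)%N ->
  (n%:R - 1 : R)^-1 * (m%:R * (n%:R - m%:R)) <= n%:R - m%:R.
Proof.
rewrite leq_eqVlt => /predU1P[->|mn]; first by rewrite subrr !mulr0.
rewrite mulrA; apply: ler_piMl; first by rewrite subr_ge0 ler_nat ltnW.
case: m mn => [|m] mn; first by rewrite mulr0 ler01.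
have n1 : 0 < (n%:R - 1 : R) by rewrite subr_gt0 ltr1n (leq_ltn_trans _ mn).
by rewrite mulrC ler_pdivrMr // mul1r lerBrDr natr1 ler_nat.
Qed.

End InversePredecessor.

Section PowR.
Variable R : realType.

Lemma powR_le_add_of_le_max (a b c p : R) : 0 <= a -> 0 <= b -> 0 <= c -> 0 <= p ->
  c <= Num.max a b -> powR c p <= powR a p + powR b p.
Proof.
move=> a0 b0 c0 p0 cab; have [ab|ba] := leP a b.
  rewrite max_r // in cab; apply: le_trans (ge0_ler_powR p0 _ _ cab) _;
    by rewrite ?nnegrE // lerDr powR_ge0.
rewrite max_l ?(ltW ba) // in cab; apply: le_trans (ge0_ler_powR p0 _ _ cab) _;
  by rewrite ?nnegrE // lerDl powR_ge0.
Qed.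

Lemma powR_le_mul_root (x q a b : R) : 0 < x -> 0 <= q -> 0 <= a -> 0 <= b ->
  a <= x * b -> (powR x q)^-1 * powR a q <= powR b q.
Proof.
move=> x0 q0 a0 b0 ab; have xq : 0 < powR x q by apply: powR_gt0.
rewrite mulrC ler_pdivrMr // mulrC -powRM ?(ltW x0) //.
by apply: (ge0_ler_powR q0); rewrite ?nnegrE // mulr_ge0 // ltW.
Qed.

Lemma powR_bigmin_le (I : finType) (F G : I -> R) (i0 : I) (q : R) : 0 <= q ->
  (forall i, 0 <= F i) -> (forall i, F i <= G i) ->
  powR (\big[Num.min/F i0]_i F i) q <= powR (\big[Num.min/G i0]_i G i) q.
Proof.
move=> q0 F0 FG; apply: (ge0_ler_powR q0); rewrite ?nnegrE ?le_bigmin_self //.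
  exact: bigmin_self_ge0.
by apply: bigmin_self_ge0 => i; apply: le_trans (F0 i) (FG i).
Qed.

Lemma root_bigmin_le (I J : finType) (F : I -> R) (G : J -> R) (i0 : I) (j0 : J) (x q : R) :
  0 < x -> 0 <= q -> (forall i, 0 <= F i) -> (forall j, 0 <= G j) ->
  (forall j, exists i, F i <= x * G j) ->
  (powR x q)^-1 * powR (\big[Num.min/F i0]_i F i) q <= powR (\big[Num.min/G j0]_j G j) q.
Proof.
move=> x0 q0 F0 G0 FG; have [j ->] := bigmin_attained G j0; have [i Fi] := FG j.
apply: powR_le_mul_root => //; first exact: bigmin_self_ge0.
exact: le_trans (bigmin_le _ i F) Fi.
Qed.

End PowR.

Section PairSums.
Variables (V : nmodType) (T : finType).

Lemma sum_pairs_split_set (A : {set T}) (F : T -> T -> V) :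
  \sum_i \sum_i' F i i'
  = \sum_(i in A) \sum_(i' in A) F i i' + \sum_i \sum_(i' | ~~ ((i \in A) && (i' \in A))) F i i'.
Proof.
rewrite [in RHS](big_mkcond (fun i => i \in A)) -big_split /=.
apply: eq_bigr => i _; rewrite (bigID (fun i' => (i \in A) && (i' \in A))) /=.
by case: (boolP (i \in A)) => iA; [congr (_ + _); apply: eq_bigl | rewrite big_pred0].
Qed.

Lemma sum_pairs_compl_split (A B : pred T) (F : T -> T -> V) : (forall j, A j -> B j) ->
  \sum_j \sum_(j' | ~~ (A j && A j')) F j j'
  = \sum_j \sum_(j' | ~~ (B j && B j')) F j j'
    + \sum_(j | B j) \sum_(j' | ~~ (A j && A j') && B j') F j j'.
Proof.
move=> AB; rewrite [X in _ = _ + X](big_mkcond B) -big_split /=.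
apply: eq_bigr => j _; rewrite (bigID (fun j' => B j && B j')) /= addrC.
congr (_ + _).
  apply: eq_bigl => j'; apply/andP/idP => [[] // | nB]; split=> //.
  by apply: contra nB => /andP[/AB -> /AB ->].
by case: (B j); [apply: eq_bigl | rewrite big_pred0 // => j'; rewrite andbF].
Qed.

Lemma sum_pairs_perm (s : {perm T}) (A : {set T}) (F : T -> T -> V) :
  \sum_j \sum_(j' | ~~ ((j \in s @: A) && (j' \in s @: A))) F j j'
  = \sum_j \sum_(j' | ~~ ((j \in A) && (j' \in A))) F (s j) (s j').
Proof.
rewrite (reindex_inj (@perm_inj _ s)); apply: eq_bigr => j _.
rewrite (reindex_inj (@perm_inj _ s)); apply: eq_bigl => j'.
by rewrite !mem_imset //; exact: perm_inj.
Qed.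

End PairSums.

Lemma sum_pairs_narrow (V : nmodType) (m n : nat) (H : (m <= n)%N)
    (P : 'I_n -> 'I_n -> bool) (F : 'I_n -> 'I_n -> V) :
  \sum_(j < n | (j < m)%N) \sum_(j' < n | P j j' && (j' < m)%N) F j j'
  = \sum_(i < m) \sum_(i' < m | P (widen_ord H i) (widen_ord H i'))
      F (widen_ord H i) (widen_ord H i').
Proof. by rewrite (big_ord_narrow H); apply: eq_bigr => i _; rewrite big_ord_narrow_cond. Qed.

Section GospaCosts.
Variables (R : realType) (X Y : Type) (dX : X -> X -> R) (dY : Y -> Y -> R) (y0 : Y).
Variables (p CY : R) (m n : nat) (H : (m <= n)%N).
Variables (v : 'I_m -> X) (e : 'I_m -> 'I_m -> Y) (w : 'I_n -> X) (f : 'I_n -> 'I_n -> Y).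
Variable s : 'S_n.

Local Notation pi i := (s (widen_ord H i)).

Definition matched_vertex_cost := \sum_(i < m) powR (dX (v i) (w (pi i))) p.

Definition matched_edge_cost :=
  \sum_(i < m) \sum_(i' < m) powR (dY (e i i') (f (pi i) (pi i'))) p.

Definition unmatched_edge_cost :=
  \sum_(j < n) \sum_(j' < n | ~~ ((j < m)%N && (j' < m)%N)) powR (dY y0 (f (s j) (s j'))) p.

Lemma matched_vertex_cost_ge0 : 0 <= matched_vertex_cost.
Proof. by apply: sumr_ge0 => i _; apply: powR_ge0. Qed.

Lemma matched_edge_cost_ge0 : 0 <= matched_edge_cost.
Proof. by do 2!(apply: sumr_ge0 => ? _); apply: powR_ge0. Qed.

Lemma unmatched_edge_cost_ge0 : 0 <= unmatched_edge_cost.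
Proof. by do 2!(apply: sumr_ge0 => ? _); apply: powR_ge0. Qed.

Lemma g1_costE C1 : g1_cost dX dY p C1 CY H v e w f s
  = (n%:R - m%:R) * powR C1 p + matched_vertex_cost
    + 2^-1 * (n%:R - 1)^-1 * (matched_edge_cost + m%:R * ((n%:R - m%:R) * powR CY p)).
Proof. by rewrite /g1_cost big_split sumr_const card_ord mulr_natl. Qed.

Lemma g2_costE C2 : g2_cost dX dY y0 p C2 H v e w f s
  = (n%:R - m%:R) * powR C2 p + matched_vertex_cost
    + 2^-1 * (n%:R - 1)^-1 * (matched_edge_cost + unmatched_edge_cost).
Proof. by []. Qed.

Lemma g1_cost_ge0 C1 : (0 < n)%N -> 0 <= g1_cost dX dY p C1 CY H v e w f s.
Proof.
move=> n0; have D0 : 0 <= n%:R - m%:R :> R by rewrite subr_ge0 ler_nat.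
rewrite g1_costE; apply: addr_ge0; first apply: addr_ge0.
- by rewrite mulr_ge0 ?powR_ge0.
- exact: matched_vertex_cost_ge0.
- rewrite !mulr_ge0 ?invr_pred_ge0 //.
  by rewrite addr_ge0 ?matched_edge_cost_ge0 // !mulr_ge0 ?powR_ge0.
Qed.

Lemma g2_cost_ge0 C2 : (0 < n)%N -> 0 <= g2_cost dX dY y0 p C2 H v e w f s.
Proof.
move=> n0; have D0 : 0 <= n%:R - m%:R :> R by rewrite subr_ge0 ler_nat.
rewrite g2_costE; apply: addr_ge0; first apply: addr_ge0.
- by rewrite mulr_ge0 ?powR_ge0.
- exact: matched_vertex_cost_ge0.
- rewrite !mulr_ge0 ?invr_pred_ge0 //.
  by rewrite addr_ge0 ?matched_edge_cost_ge0 ?unmatched_edge_cost_ge0.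
Qed.

Lemma g1_cost_eq_g2_cost C1 C2 : (n <= m)%N ->
  g1_cost dX dY p C1 CY H v e w f s = g2_cost dX dY y0 p C2 H v e w f s.
Proof.
move=> nm; have mn : m = n by apply/eqP; rewrite eqn_leq H.
rewrite g1_costE g2_costE; have -> : unmatched_edge_cost = 0.
  by rewrite /unmatched_edge_cost big1 // => j _; rewrite big_pred0 // => j'; rewrite mn !ltn_ord.
by rewrite mn subrr !(mul0r, mulr0, addr0).
Qed.

Lemma g1_cost_le_g2_cost C1 C2 : (0 < n)%N ->
  powR C1 p <= powR C2 p - 2^-1 * powR CY p ->
  g1_cost dX dY p C1 CY H v e w f s <= g2_cost dX dY y0 p C2 H v e w f s.
Proof.
move=> n0 hC; rewrite g1_costE g2_costE.
have D0 : 0 <= n%:R - m%:R :> R by rewrite subr_ge0 ler_nat.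
have K0 := invr_pred_ge0 R n0.
have KmD := ler_wpM2r (powR_ge0 CY p) (invr_pred_mul_le R H).
have DC := ler_wpM2l D0 hC.
have U0 := unmatched_edge_cost_ge0.
have KU := mulr_ge0 K0 U0.
set K := (n%:R - 1)^-1 in K0 KmD KU *.
lra.
Qed.

Hypothesis p_gt0 : 0 < p.
Hypothesis dY_ge0 : forall y y', 0 <= dY y y'.
Hypothesis dY_refl : forall y, dY y y = 0.
Hypothesis dY_le_CY : forall y y', dY y y' <= CY.

Lemma powR_dY_le y y' : powR (dY y y') p <= powR CY p.
Proof. by apply: (ge0_ler_powR (ltW p_gt0)); rewrite ?nnegrE ?(le_trans (dY_ge0 y y')). Qed.

(* A row [j < m] has [n - m] terms; each of the [n - m] rows [j >= m] has [n - 1]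
   nonzero terms, its diagonal one vanishing. *)
Lemma unmatched_edge_cost_le : (forall k, f k k = y0) ->
  unmatched_edge_cost <= (n%:R - m%:R) * (m%:R + n%:R - 1) * powR CY p.
Proof.
move=> f_diag; set c := powR CY p.
have row_le (j : 'I_n) :
    \sum_(j' < n | ~~ ((j < m)%N && (j' < m)%N)) powR (dY y0 (f (s j) (s j'))) p
    <= (if (j < m)%N then n%:R - m%:R else n%:R - 1) * c.
  case: ifP => jm /=.
    by rewrite -sumr_ord_ge_const //; apply: ler_sum => j' _; apply: powR_dY_le.
  rewrite (bigD1 j) //= f_diag dY_refl powR0 ?gt_eqF // add0r -(sumr_ord_neq_const _ j).
  by apply: ler_sum => j' _; apply: powR_dY_le.
apply: le_trans (ler_sum _ (fun j _ => row_le j)) _.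
rewrite (bigID (fun j : 'I_n => (j < m)%N)) /=.
rewrite (eq_bigr (fun=> (n%:R - m%:R) * c)); last by move=> j ->.
rewrite [X in _ + X](eq_bigr (fun=> (n%:R - 1) * c)); last by move=> j /negbTE ->.
rewrite sumr_ord_lt_const // sumr_ord_ge_const //; lra.
Qed.

Lemma g2_cost_le_g1_cost C1 C2 : (0 < n)%N -> (forall k, f k k = y0) ->
  powR C2 p <= powR C1 p - 2^-1 * powR CY p ->
  g2_cost dX dY y0 p C2 H v e w f s <= g1_cost dX dY p C1 CY H v e w f s.
Proof.
move=> n0 f_diag hC; rewrite g1_costE g2_costE.
have D0 : 0 <= n%:R - m%:R :> R by rewrite subr_ge0 ler_nat.
have K0 := invr_pred_ge0 R n0.
have KU := ler_wpM2l K0 (unmatched_edge_cost_le f_diag).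
have Kn := ler_wpM2r (mulr_ge0 D0 (powR_ge0 CY p)) (invr_pred_mulr_le1 R n0).
have DC := ler_wpM2l D0 hC.
set K := (n%:R - 1)^-1 in K0 KU Kn *.
lra.
Qed.

Hypothesis p_ge1 : 1 <= p.
Hypothesis dY_tri : forall y y' y'', dY y y'' <= dY y y' + dY y' y''.
Hypothesis dY_le_max : 1 < p -> forall y1 y2, dY y1 y2 <= Num.max (dY y1 y0) (dY y0 y2).

Lemma powR_dY_le_add y1 y2 : powR (dY y1 y2) p <= powR (dY y1 y0) p + powR (dY y0 y2) p.
Proof.
have [p1|p1] := ltrP 1 p.
  by apply: powR_le_add_of_le_max; rewrite ?dY_ge0 ?(ltW p_gt0) ?dY_le_max.
have -> : p = 1 by apply/eqP; rewrite eq_le p1 p_ge1.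
by rewrite !powRr1 ?dY_ge0.
Qed.

Variable I : {set 'I_m}.

Lemma edge_costs_le_gtt :
  matched_edge_cost + unmatched_edge_cost
  <= \sum_(i in I) \sum_(i' in I) powR (dY (e i i') (f (pi i) (pi i'))) p
   + \sum_(i < m) \sum_(i' < m | ~~ ((i \in I) && (i' \in I))) powR (dY (e i i') y0) p
   + \sum_(j < n) \sum_(j' < n | ~~ ((j \in [set pi i | i in I]) && (j' \in [set pi i | i in I])))
       powR (dY y0 (f j j')) p.
Proof.
set W := widen_ord H @: I.
have winj : injective (widen_ord H) by move=> i i' /(congr1 val) /= /val_inj.
have -> : [set pi i | i in I] = s @: W by rewrite -imset_comp.
rewrite sum_pairs_perm (sum_pairs_compl_split (A := fun j => j \in W) (B := fun j => (j < m)%N));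
  last by move=> _ /imsetP[i _ ->]; rewrite /= ltn_ord.
have narrow := sum_pairs_narrow H (fun j j' => ~~ ((j \in W) && (j' \in W)))
  (fun j j' => powR (dY y0 (f (s j) (s j'))) p).
rewrite /= in narrow; rewrite {}narrow.
under eq_bigr => i _ do under eq_bigl => i' do rewrite !mem_imset //.
rewrite /matched_edge_cost (sum_pairs_split_set I) -/unmatched_edge_cost.
have out_le : \sum_(i < m) \sum_(i' < m | ~~ ((i \in I) && (i' \in I)))
      powR (dY (e i i') (f (pi i) (pi i'))) p
    <= \sum_(i < m) \sum_(i' < m | ~~ ((i \in I) && (i' \in I))) powR (dY (e i i') y0) p
     + \sum_(i < m) \sum_(i' < m | ~~ ((i \in I) && (i' \in I))) powR (dY y0 (f (pi i) (pi i'))) p.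
  rewrite -big_split; apply: ler_sum => i _; rewrite -big_split; apply: ler_sum => i' _.
  exact: powR_dY_le_add.
lra.
Qed.

Lemma gtt_cost_ge0 C : 0 <= gtt_cost dX dY y0 p C H v e w f I s.
Proof.
have kI : (#|I| <= m)%N by rewrite -[X in (_ <= X)%N](card_ord m) max_card.
have : 0 <= m%:R + n%:R - 2 * #|I|%:R :> R.
  have : #|I|%:R <= m%:R :> R by rewrite ler_nat.
  have : m%:R <= n%:R :> R by rewrite ler_nat.
  lra.
rewrite /gtt_cost /= => k0; have P0 a : 0 <= powR a p by apply: powR_ge0.
by repeat apply: addr_ge0; try apply: mulr_ge0 => //; repeat (apply: sumr_ge0 => ? _).
Qed.

Variable CX : R.
Hypothesis dX_ge0 : forall x x', 0 <= dX x x'.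
Hypothesis dX_le_CX : forall x x', dX x x' <= CX.

Lemma powR_dX_le x x' : powR (dX x x') p <= powR CX p.
Proof. by apply: (ge0_ler_powR (ltW p_gt0)); rewrite ?nnegrE ?(le_trans (dX_ge0 x x')). Qed.

(* [m + n - 2|I| = (n - m) + 2 (m - |I|)] *)
Lemma vertex_costs_le_gtt Cg C : powR CX p <= powR Cg p -> powR Cg p <= powR C p ->
  (n%:R - m%:R) * powR Cg p + matched_vertex_cost
  <= (m%:R + n%:R - 2 * #|I|%:R) * powR C p + \sum_(i in I) powR (dX (v i) (w (pi i))) p.
Proof.
move=> XCg CgC; rewrite /matched_vertex_cost (bigID (mem I)) /=.
have kI : (#|I| <= m)%N by rewrite -[X in (_ <= X)%N](card_ord m) max_card.
have unassigned : \sum_(i < m | i \notin I) powR (dX (v i) (w (pi i))) p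
    <= (m%:R - #|I|%:R) * powR CX p.
  apply: le_trans (ler_sum _ (fun i _ => powR_dX_le (v i) (w (pi i)))) _.
  have E : \sum_(i < m) powR CX p
      = \sum_(i in I) powR CX p + \sum_(i < m | i \notin I) powR CX p by exact: bigID.
  by move: E; rewrite !sumr_const card_ord -![powR CX p *+ _]mulr_natl; lra.
have k0 : 0 <= m%:R - #|I|%:R :> R by rewrite subr_ge0 ler_nat.
have D0 : 0 <= n%:R - m%:R :> R by rewrite subr_ge0 ler_nat.
have := ler_wpM2l D0 CgC; have := ler_wpM2l k0 (le_trans XCg CgC).
have := mulr_ge0 k0 (powR_ge0 C p); lra.
Qed.

Lemma gospa_core_le_gtt_cost Cg C : powR CX p <= powR Cg p -> powR Cg p <= powR C p ->
  (n%:R - m%:R) * powR Cg p + matched_vertex_cost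
    + 2^-1 * (matched_edge_cost + unmatched_edge_cost)
  <= gtt_cost dX dY y0 p C H v e w f I s.
Proof.
move=> XCg CgC; have := vertex_costs_le_gtt XCg CgC; have := edge_costs_le_gtt.
rewrite /gtt_cost /=; lra.
Qed.

Lemma g2_cost_le_gtt_cost C2 C : (0 < n)%N ->
  powR CX p <= powR C2 p -> powR C2 p <= powR C p ->
  g2_cost dX dY y0 p C2 H v e w f s <= gtt_cost dX dY y0 p C H v e w f I s.
Proof.
move=> n0 XC2 C2C; rewrite g2_costE.
have := gospa_core_le_gtt_cost XC2 C2C.
have EU0 := addr_ge0 matched_edge_cost_ge0 unmatched_edge_cost_ge0.
have := ler_wpM2r EU0 (invr_pred_le1 R n); lra.
Qed.

Lemma g1_cost_le_gtt_cost C1 C : (0 < n)%N ->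
  powR CX p + 2^-1 * powR CY p <= powR C1 p -> powR C1 p <= powR C p ->
  g1_cost dX dY p C1 CY H v e w f s <= n%:R * gtt_cost dX dY y0 p C H v e w f I s.
Proof.
move=> n0 hC1 C1C; rewrite g1_costE.
have XC1 : powR CX p <= powR C1 p by have := powR_ge0 CY p; lra.
have core := gospa_core_le_gtt_cost XC1 C1C.
have coreC := gospa_core_le_gtt_cost (le_trans XC1 C1C) (lexx _).
have E0 := matched_edge_cost_ge0; have U0 := unmatched_edge_cost_ge0.
have V0 := matched_vertex_cost_ge0.
have T0 := gtt_cost_ge0 C.
have D0 : 0 <= n%:R - m%:R :> R by rewrite subr_ge0 ler_nat.
have [n1|n2] : n = 1%N \/ (2 <= n)%N.
  by move: n0; rewrite leq_eqVlt => /predU1P[<-|]; [left | right].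
  have n1R : n%:R = 1 :> R by rewrite n1.
  by rewrite n1R subrr invr0 !(mulr0, mul0r, mul1r) in core *; lra.
have KE := ler_wpM2r E0 (invr_pred_le1 R n).
have KmD := ler_wpM2r (powR_ge0 CY p) (invr_pred_mul_le R H).
have DC1 := ler_wpM2l D0 C1C.
have YC1 : 2^-1 * powR CY p <= powR C1 p by have := powR_ge0 CX p; lra.
have DY := ler_wpM2l D0 YC1.
have n2R : 2 <= n%:R :> R by rewrite ler_nat.
have nT := ler_wpM2r T0 n2R.
set K := (n%:R - 1)^-1 in KE KmD *; set D := n%:R - m%:R in D0 KmD DC1 DY core coreC *.
lra.
Qed.

End GospaCosts.

Section GospaDistances.
Variables (R : realType) (X Y : Type) (dX : X -> X -> R) (dY : Y -> Y -> R) (y0 : Y).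
Variables (p CX CY : R) (m n : nat) (H : (m <= n)%N).
Variables (v : 'I_m -> X) (e : 'I_m -> 'I_m -> Y) (w : 'I_n -> X) (f : 'I_n -> 'I_n -> Y).
Hypothesis p_ge1 : 1 <= p.
Hypothesis dX_ge0 : forall x x', 0 <= dX x x'.
Hypothesis dX_le_CX : forall x x', dX x x' <= CX.
Hypothesis dY_ge0 : forall y y', 0 <= dY y y'.
Hypothesis dY_refl : forall y, dY y y = 0.
Hypothesis dY_le_CY : forall y y', dY y y' <= CY.
Hypothesis dY_tri : forall y y' y'', dY y y'' <= dY y y' + dY y' y''.
Hypothesis dY_le_max : 1 < p -> forall y1 y2, dY y1 y2 <= Num.max (dY y1 y0) (dY y0 y2).

Let p_gt0 : 0 < p. Proof. exact: lt_le_trans ltr01 p_ge1. Qed.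
Let inv_p_ge0 : 0 <= p^-1. Proof. by rewrite invr_ge0 ltW. Qed.

Lemma g1_le_eq_g2_le C1 C2 (Hn : (n <= n)%N) (v' : 'I_n -> X) (e' : 'I_n -> 'I_n -> Y) :
  g1_le dX dY p C1 CY Hn v' e' w f = g2_le dX dY y0 p C2 Hn v' e' w f.
Proof.
have E : g1_cost dX dY p C1 CY Hn v' e' w f = g2_cost dX dY y0 p C2 Hn v' e' w f.
  by apply: funext => s; apply: g1_cost_eq_g2_cost.
by rewrite /g1_le /g2_le E.
Qed.

Lemma g1_le_le_g2_le C1 C2 : powR C1 p <= powR C2 p - 2^-1 * powR CY p ->
  g1_le dX dY p C1 CY H v e w f <= g2_le dX dY y0 p C2 H v e w f.
Proof.
move=> hC; rewrite /g1_le /g2_le; case: ifP => [_|/negbT]; first exact: lexx.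
rewrite -lt0n => n0; apply: ler_wpM2l; first by rewrite invr_ge0 powR_ge0.
by apply: powR_bigmin_le => // s; [apply: g1_cost_ge0 | apply: g1_cost_le_g2_cost].
Qed.

Lemma g2_le_le_g1_le C1 C2 : (forall k, f k k = y0) ->
  powR C2 p <= powR C1 p - 2^-1 * powR CY p ->
  g2_le dX dY y0 p C2 H v e w f <= g1_le dX dY p C1 CY H v e w f.
Proof.
move=> f_diag hC; rewrite /g1_le /g2_le; case: ifP => [_|/negbT]; first exact: lexx.
rewrite -lt0n => n0; apply: ler_wpM2l; first by rewrite invr_ge0 powR_ge0.
by apply: powR_bigmin_le => // s; [apply: g2_cost_ge0 | apply: g2_cost_le_g1_cost].
Qed.

Lemma g1_le_le_gtt_le C1 C : powR CX p + 2^-1 * powR CY p <= powR C1 p ->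
  powR C1 p <= powR C p ->
  g1_le dX dY p C1 CY H v e w f <= gtt_le dX dY y0 p C H v e w f.
Proof.
move=> hC1 C1C; rewrite /g1_le /gtt_le; case: ifP => [_|/negbT]; first exact: powR_ge0.
rewrite -lt0n => n0.
apply: (root_bigmin_le 1%g (finset.set0, 1%g)) => //; first by rewrite ltr0n.
- by move=> s; apply: g1_cost_ge0.
- by move=> x; apply: gtt_cost_ge0.
- by move=> x; exists x.2; apply: g1_cost_le_gtt_cost.
Qed.

Lemma g2_le_le_gtt_le C2 C : powR CX p <= powR C2 p -> powR C2 p <= powR C p ->
  g2_le dX dY y0 p C2 H v e w f <= gtt_le dX dY y0 p C H v e w f.
Proof.
move=> XC2 C2C; rewrite /g2_le /gtt_le; case: ifP => [_|/negbT]; first exact: powR_ge0.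
rewrite -lt0n => n0.
apply: (root_bigmin_le 1%g (finset.set0, 1%g)) => //; first by rewrite ltr0n.
- by move=> s; apply: g2_cost_ge0.
- by move=> x; apply: gtt_cost_ge0.
- move=> x; exists x.2; apply: (le_trans (y := gtt_cost dX dY y0 p C H v e w f x.1 x.2)).
    exact: g2_cost_le_gtt_cost.
  by rewrite ler_peMl ?gtt_cost_ge0 // ler1n.
Qed.

End GospaDistances.

Theorem mainTheorem8 (R : realType) (X Y : Type)
  (dX : X -> X -> R) (dY : Y -> Y -> R) (y0 : Y) (p CX CY C1 C2 : R)
  (dX_refl : forall x, dX x x = 0)
  (dX_sym : forall x x', dX x x' = dX x' x)
  (dX_tri : forall x x' x'', dX x x'' <= dX x x' + dX x' x'')
  (dY_refl : forall y, dY y y = 0)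
  (dY_sym : forall y y', dY y y' = dY y' y)
  (dY_tri : forall y y' y'', dY y y'' <= dY y y' + dY y' y'')
  (hp : 1 <= p)
  (hCX : 0 <= CX) (hCY : 0 <= CY)
  (diamX : forall x x', dX x x' <= CX)
  (diamY : forall y y', dY y y' <= CY)
  (hC1 : 0 <= C1) (hC1p : powR CX p + 2^-1 * powR CY p <= powR C1 p)
  (hC2 : 0 <= C2) (hC2p : powR CX p + powR CY p <= powR C2 p)
  (hY2 : 1 < p -> forall y1 y2, dY y1 y2 <= Num.max (dY y1 y0) (dY y0 y2)) :
  (* (a) *)
  (forall (n : nat) (v : 'I_n -> X) (e : 'I_n -> 'I_n -> Y)
          (w : 'I_n -> X) (f : 'I_n -> 'I_n -> Y),
     is_graph y0 e -> is_graph y0 f ->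
     dGR1 dX dY p C1 CY v e w f = dGR2 dX dY y0 p C2 v e w f)
  (* (b) *)
  /\ (powR C1 p <= powR C2 p - 2^-1 * powR CY p ->
      forall (m n : nat) (v : 'I_m -> X) (e : 'I_m -> 'I_m -> Y)
             (w : 'I_n -> X) (f : 'I_n -> 'I_n -> Y),
        is_graph y0 e -> is_graph y0 f ->
        dGR1 dX dY p C1 CY v e w f <= dGR2 dX dY y0 p C2 v e w f)
  (* (c) *)
  /\ (powR C2 p <= powR C1 p - 2^-1 * powR CY p ->
      forall (m n : nat) (v : 'I_m -> X) (e : 'I_m -> 'I_m -> Y)
             (w : 'I_n -> X) (f : 'I_n -> 'I_n -> Y),
        is_graph y0 e -> is_graph y0 f ->
        dGR2 dX dY y0 p C2 v e w f <= dGR1 dX dY p C1 CY v e w f)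
  (* (d) *)
  /\ (forall C : R, 0 < C ->
      forall (m n : nat) (v : 'I_m -> X) (e : 'I_m -> 'I_m -> Y)
             (w : 'I_n -> X) (f : 'I_n -> 'I_n -> Y),
        is_graph y0 e -> is_graph y0 f ->
        (powR C1 p <= powR C p -> dGR1 dX dY p C1 CY v e w f <= dGA dX dY y0 p C v e w f)
        /\ (powR C2 p <= powR C p -> dGR2 dX dY y0 p C2 v e w f <= dGA dX dY y0 p C v e w f)).
Proof.
have dX_ge0 := pseudometric_ge0 dX_refl dX_sym dX_tri.
have dY_ge0 := pseudometric_ge0 dY_refl dY_sym dY_tri.
have XC2 : powR CX p <= powR C2 p by have := powR_ge0 CY p; lra.
split.
  move=> n v e w f _ _; rewrite /dGR1 /dGR2; apply: (dep_if_rel (P := eq)) => H.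
    exact: g1_le_eq_g2_le.
  by have := leqnn n; rewrite H.
split.
  move=> hC m n v e w f _ _; rewrite /dGR1 /dGR2.
  by apply: (dep_if_rel (P := Order.le)) => H; apply: g1_le_le_g2_le.
split.
  move=> hC m n v e w f [_ e_diag] [_ f_diag]; rewrite /dGR1 /dGR2.
  by apply: (dep_if_rel (P := fun a b => b <= a)) => H; apply: g2_le_le_g1_le.
move=> C _ m n v e w f _ _; rewrite /dGR1 /dGR2 /dGA.
split=> hC; apply: (dep_if_rel (P := Order.le)) => H.
- exact: g1_le_le_gtt_le.
- exact: g1_le_le_gtt_le.
- exact: g2_le_le_gtt_le.
- exact: g2_le_le_gtt_le.
Qed.
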